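(* Let $f:G\to H$, $f':G'\to H'$, $\varphi':G'\to G$ and $\varphi:H'\to H$ be group homomorphisms with $f\circ\varphi'=\varphi\circ f'$, and suppose this square is a weak pullback. If $\varphi$ is surjective or $f'$ does not admit a global section, then $\mathrm{sec}(f')\leq \mathrm{sec}(f)$.
   Context: The commutative square $f\circ\varphi'=\varphi\circ f'$ is a weak pullback if for every group $L$ and homomorphisms $\alpha:L\to H'$, $\beta:L\to G$ with $\varphi\circ\alpha=f\circ\beta$, there exists a (not necessarily unique) homomorphism $h:L\to G'$ with $f'\circ h=\alpha$ and $\varphi'\circ h=\beta$. For a homomorphism $f:G\to H$ and a subgroup $L\le H$, a local section of $f$ on $L$ is a homomorphism $s:L\to G$ with $f\circ s=\mathrm{incl}_L$ (the inclusion $L\hookrightarrow H$); a global section is a local section on $L=H$. The sectional number $\mathrm{sec}(f)$ is the least positive integer $m$ such that there exist proper subgroups $H_1,\ldots,H_m$ of $H$ with $H=H_1\cup\cdots\cup H_m$ and such that $f$ admits a local section on each $H_i$; $\mathrm{sec}(f)=\infty$ if no such $m$ exists. *)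

From Stdlib Require Import Arith ClassicalEpsilon.

Record Group : Type := {
  car :> Type;
  gmul : car -> car -> car;
  gone : car;
  ginv : car -> car;
  gmulA : forall x y z, gmul x (gmul y z) = gmul (gmul x y) z;
  gmul1 : forall x, gmul gone x = x;
  gmulV : forall x, gmul (ginv x) x = gone
}.

Arguments gmul {g} _ _.
Arguments gone {g}.
Arguments ginv {g} _.

Definition is_hom {G H : Group} (f : G -> H) : Prop :=
  forall x y : G, f (gmul x y) = gmul (f x) (f y).

Definition is_subgroup {H : Group} (L : H -> Prop) : Prop :=
  L gone /\ (forall x y, L x -> L y -> L (gmul x y)) /\ (forall x, L x -> L (ginv x)).

Definition proper {H : Group} (L : H -> Prop) : Prop := exists x : H, ~ L x.

(* local section of f on the subgroup L: a homomorphism s : L -> G with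
   f (s x) = x for x in L (s is given as a function on H, only its
   restriction to L matters). *)
Definition local_section {G H : Group} (f : G -> H) (L : H -> Prop) (s : H -> G) : Prop :=
  (forall x y, L x -> L y -> s (gmul x y) = gmul (s x) (s y)) /\
  (forall x, L x -> f (s x) = x).

Definition global_section {G H : Group} (f : G -> H) (s : H -> G) : Prop :=
  local_section f (fun _ => True) s.

Definition sec_cover {G H : Group} (f : G -> H) (m : nat) : Prop :=
  0 < m /\
  exists Hs : nat -> H -> Prop,
    (forall i, i < m ->
       is_subgroup (Hs i) /\ proper (Hs i) /\ exists s, local_section f (Hs i) s) /\
    (forall y : H, exists i, i < m /\ Hs i y).

(* k is the sectional number (None = infinity) *)
Definition is_sec {G H : Group} (f : G -> H) (k : option nat) : Prop :=
  match k with
  | Some m => sec_cover f m /\ (forall m', sec_cover f m' -> m <= m')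
  | None => forall m, ~ sec_cover f m
  end.

Definition sec {G H : Group} (f : G -> H) : option nat :=
  epsilon (inhabits None) (fun k => is_sec f k).

Definition ole (a b : option nat) : Prop :=
  match a, b with
  | _, None => True
  | None, Some _ => False
  | Some x, Some y => x <= y
  end.

Definition weak_pullback {G H G' H' : Group}
  (f : G -> H) (f' : G' -> H') (phi' : G' -> G) (phi : H' -> H) : Prop :=
  forall (L : Group) (alpha : L -> H') (beta : L -> G),
    is_hom alpha -> is_hom beta -> (forall x, phi (alpha x) = f (beta x)) ->
    exists h : L -> G', is_hom h /\ (forall x, f' (h x) = alpha x) /\
                        (forall x, phi' (h x) = beta x).

From Stdlib Require Import Wf_nat Classical ClassicalEpsilon ProofIrrelevance.

(* Pull a sectional cover {H_i} of H back along phi.  The preimages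
   phi^-1(H_i) cover H', and the weak pullback property, applied to the
   inclusion phi^-1(H_i) -> H' and to s_i o phi, lifts a local section s_i of
   f on H_i to a local section of f' on phi^-1(H_i).  Each phi^-1(H_i) is
   proper: when phi is onto because H_i is, and otherwise because a local
   section of f' on all of H' would be a global one.  Hence every sectional
   cover of f of size m yields one of f' of size m. *)

Section GroupFacts.
Variable K : Group.

Lemma mulg_cancel_l (a x y : K) : gmul a x = gmul a y -> x = y.
Proof.
  intro E. rewrite <- (gmul1 K x), <- (gmul1 K y), <- (gmulV K a), <- !gmulA, E.
  reflexivity.
Qed.

Lemma mulgV (x : K) : gmul x (ginv x) = gone.
Proof.
  assert (idem : gmul (gmul x (ginv x)) (gmul x (ginv x)) = gmul x (ginv x)).
  { rewrite <- gmulA, (gmulA K (ginv x) x), gmulV, gmul1. reflexivity. }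
  rewrite <- (gmulV K (gmul x (ginv x))). rewrite <- idem at 3.
  rewrite gmulA, gmulV, gmul1. reflexivity.
Qed.

Lemma mulg1 (x : K) : gmul x gone = x.
Proof. rewrite <- (gmulV K x), gmulA, mulgV, gmul1. reflexivity. Qed.

Lemma mulg_cancel_r (a x y : K) : gmul x a = gmul y a -> x = y.
Proof.
  intro E. rewrite <- (mulg1 x), <- (mulg1 y), <- (mulgV a), !gmulA, E.
  reflexivity.
Qed.

End GroupFacts.

Section Homomorphisms.
Variables A B : Group.
Variable p : A -> B.
Hypothesis hp : is_hom p.

Lemma hom1 : p gone = gone.
Proof.
  apply (mulg_cancel_l _ (p gone)). rewrite <- hp, gmul1, mulg1. reflexivity.
Qed.

Lemma homV (x : A) : p (ginv x) = ginv (p x).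
Proof.
  apply (mulg_cancel_r _ (p x)). rewrite <- hp, !gmulV. exact hom1.
Qed.

Lemma preimage_subgroup (L : B -> Prop) :
  is_subgroup L -> is_subgroup (fun x => L (p x)).
Proof.
  intros [L1 [LM LV]]. split; [|split].
  - rewrite hom1. exact L1.
  - intros x y hx hy. rewrite hp. auto.
  - intros x hx. rewrite homV. auto.
Qed.

End Homomorphisms.

Definition sub_group (K : Group) (L : K -> Prop) (hL : is_subgroup L) : Group.
Proof.
  refine (Build_Group {x | L x}
    (fun a b => exist _ (gmul (proj1_sig a) (proj1_sig b))
                  (proj1 (proj2 hL) _ _ (proj2_sig a) (proj2_sig b)))
    (exist _ gone (proj1 hL))
    (fun a => exist _ (ginv (proj1_sig a)) (proj2 (proj2 hL) _ (proj2_sig a)))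
    _ _ _);
  [intros [x ?] [y ?] [z ?] | intros [x ?] | intros [x ?]];
  apply subset_eq_compat; [apply gmulA | apply gmul1 | apply gmulV].
Defined.

Lemma local_section_of_sub_hom (G H : Group) (f : G -> H) (L : H -> Prop)
  (hL : is_subgroup L) (h : sub_group H L hL -> G) :
  is_hom h -> (forall x, f (h x) = proj1_sig x) ->
  exists s, local_section f L s.
Proof.
  intros hh hfh. destruct hL as [L1 [LM LV]].
  exists (fun y => match excluded_middle_informative (L y) with
                   | left py => h (exist _ y py)
                   | right _ => gone
                   end).
  split.
  - intros x y px py.
    destruct (excluded_middle_informative (L (gmul x y))) as [pxy|n];
      [|exfalso; auto].
    destruct (excluded_middle_informative (L x)) as [px'|]; [|tauto].
    destruct (excluded_middle_informative (L y)) as [py'|]; [|tauto].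
    rewrite <- hh. f_equal. apply subset_eq_compat. reflexivity.
  - intros x px.
    destruct (excluded_middle_informative (L x)) as [px'|]; [|tauto].
    apply hfh.
Qed.

Lemma weak_pullback_local_section (G H G' H' : Group)
  (f : G -> H) (f' : G' -> H') (phi' : G' -> G) (phi : H' -> H)
  (hphi : is_hom phi) (hwp : weak_pullback f f' phi' phi)
  (L : H -> Prop) (hL : is_subgroup L) :
  (exists s, local_section f L s) ->
  exists s', local_section f' (fun y => L (phi y)) s'.
Proof.
  intros [s [sM sf]].
  set (hL' := preimage_subgroup _ _ phi hphi L hL).
  destruct (hwp (sub_group H' _ hL') (@proj1_sig _ _)
                (fun y => s (phi (proj1_sig y)))) as [h [hh [hf' _]]].
  - intros x y. reflexivity.
  - intros [x px] [y py]. simpl. rewrite hphi. apply sM; assumption.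
  - intros [x px]. simpl. rewrite sf; auto.
  - exact (local_section_of_sub_hom _ _ f' _ hL' h hh hf').
Qed.

Lemma global_section_of_local (G H : Group) (f : G -> H) (L : H -> Prop) (s : H -> G) :
  (forall y, L y) -> local_section f L s -> global_section f s.
Proof. intros full [sM sf]. split; intros; [apply sM | apply sf]; apply full. Qed.

Lemma preimage_proper (G' H' H : Group) (f' : G' -> H') (phi : H' -> H)
  (L : H -> Prop) (s' : H' -> G') :
  (forall y, exists x, phi x = y) \/ ~ (exists s, global_section f' s) ->
  proper L -> local_section f' (fun y => L (phi y)) s' ->
  proper (fun y => L (phi y)).
Proof.
  intros [surj | no_global] [y0 Ly0] hs'.
  - destruct (surj y0) as [x Hx]. exists x. rewrite Hx. exact Ly0.
  - apply NNPP. intro full. apply no_global. exists s'.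
    refine (global_section_of_local _ _ f' _ s' _ hs').
    intro y. apply NNPP. intro n. apply full. exists y. exact n.
Qed.

Lemma is_sec_of_sec_cover (G H : Group) (f : G -> H) (m : nat) :
  sec_cover f m -> exists k, is_sec f (Some k).
Proof.
  intro Hm.
  destruct (dec_inh_nat_subset_has_unique_least_element (sec_cover f))
    as [k [[Hk kmin] _]].
  - intro n. apply classic.
  - exists m. exact Hm.
  - exists k. split; assumption.
Qed.

Lemma sec_spec (G H : Group) (f : G -> H) : is_sec f (sec f).
Proof.
  unfold sec. apply epsilon_spec.
  destruct (classic (exists m, sec_cover f m)) as [[m Hm]|none].
  - destruct (is_sec_of_sec_cover _ _ f m Hm) as [k Hk]. exists (Some k). exact Hk.
  - exists None. intros m Hm. apply none. exists m. exact Hm.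
Qed.

Lemma sec_le_of_cover (G H G' H' : Group) (f : G -> H) (f' : G' -> H') :
  (forall m, sec_cover f m -> sec_cover f' m) -> ole (sec f') (sec f).
Proof.
  intro cov. pose proof (sec_spec _ _ f) as S. pose proof (sec_spec _ _ f') as S'.
  destruct (sec f) as [m|]; destruct (sec f') as [k|]; simpl; auto.
  - destruct S as [Sm _]. destruct S' as [_ Smin]. apply Smin, cov, Sm.
  - destruct S as [Sm _]. apply (S' m), cov, Sm.
Qed.

Theorem theorem3p2 (G H G' H' : Group)
  (f : G -> H) (f' : G' -> H') (phi' : G' -> G) (phi : H' -> H)
  (hf : is_hom f) (hf' : is_hom f') (hphi' : is_hom phi') (hphi : is_hom phi)
  (hcomm : forall x : G', f (phi' x) = phi (f' x))
  (hwp : weak_pullback f f' phi' phi)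
  (hcase : (forall y : H, exists x : H', phi x = y) \/
           ~ (exists s : H' -> G', global_section f' s)) :
  ole (sec f') (sec f).
Proof.
  apply sec_le_of_cover. intros m [m_pos [Hs [HHs Hcov]]].
  split; [exact m_pos|]. exists (fun i y => Hs i (phi y)). split.
  - intros i Hi. destruct (HHs i Hi) as [sub [prop sect]].
    destruct (weak_pullback_local_section _ _ _ _ f f' phi' phi hphi hwp _ sub sect)
      as [s' Hs'].
    split; [exact (preimage_subgroup _ _ phi hphi _ sub)|].
    split; [exact (preimage_proper _ _ _ f' phi _ s' hcase prop Hs')|].
    exists s'. exact Hs'.
  - intro y. destruct (Hcov (phi y)) as [i [Hi Hy]]. exists i. auto.
Qed.
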